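(* Let $d$ be a premetric with open balls on a topological space $X$. (1) If $\overline d=\overline d^\circ$, then the premetric $\overline d=\overline d^\circ$ is right-continuous. (2) If $d$ is $\overline{\mathsf{dist}}$-continuous, then $\overline d=\overline d^\circ$ and this premetric is right-continuous and $\overline{\mathsf{dist}}$-continuous.
   Context: A premetric on $X$ is $d:X\times X\to[0,\infty)$ with $d(x,x)=0$. $B_d(x,\varepsilon)=\{y:d(x,y)<\varepsilon\}$, $B_d(A,\varepsilon)=\bigcup_{a\in A}B_d(a,\varepsilon)$; $d$ has open balls if every $B_d(x,\varepsilon)$ is open; right-continuous if $y\mapsto d(x,y)$ is continuous for each $x$. For non-empty $A$: $\overline d_A(x)=\inf\{\varepsilon>0:x\in\overline{B_d(A,\varepsilon)}\}$, $\overline d^\circ_A(x)=\inf\{\varepsilon>0:x\in B_d(A,\varepsilon)\cup\mathrm{int}\,\overline{B_d(A,\varepsilon)}\}$; a premetric is $\overline{\mathsf{dist}}$-continuous if $\overline d_A$ is continuous for every non-empty $A$. $\overline d(x,y)=\overline d_{\{x\}}(y)$, $\overline d^\circ(x,y)=\overline d^\circ_{\{x\}}(y)$. *)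

From HB Require Import structures.
From mathcomp Require Import all_boot all_order all_algebra.
From mathcomp Require Import all_classical all_reals topology normedtype.
Set Implicit Arguments. Unset Strict Implicit. Unset Printing Implicit Defensive.
Import Order.TTheory GRing.Theory Num.Theory.
Import numFieldNormedType.Exports.
Local Open Scope classical_set_scope.
Local Open Scope ring_scope.

Section Premetric.
Variables (R : realType) (X : topologicalType).

Definition is_premetric (d : X -> X -> R) :=
  (forall x y, 0 <= d x y) /\ (forall x, d x x = 0).

Definition pball (d : X -> X -> R) (x : X) (e : R) : set X :=
  [set y | d x y < e].

Definition pballA (d : X -> X -> R) (A : set X) (e : R) : set X :=
  \bigcup_(a in A) pball d a e.

Definition has_open_balls (d : X -> X -> R) :=
  forall x e, 0 < e -> open (pball d x e).

Definition right_continuous (d : X -> X -> R) :=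
  forall x, continuous (d x).

Definition dbarA (d : X -> X -> R) (A : set X) (x : X) : R :=
  inf [set e : R | 0 < e /\ closure (pballA d A e) x].

Definition dbarcA (d : X -> X -> R) (A : set X) (x : X) : R :=
  inf [set e : R | 0 < e /\
        (pballA d A e `|` interior (closure (pballA d A e))) x].

Definition dist_continuous (d : X -> X -> R) :=
  forall A : set X, A !=set0 -> continuous (dbarA d A).

Definition dbar (d : X -> X -> R) (x y : X) : R := dbarA d [set x] y.
Definition dbarc (d : X -> X -> R) (x y : X) : R := dbarcA d [set x] y.

End Premetric.

From HB Require Import structures.
From mathcomp Require Import all_boot all_order all_algebra.
From mathcomp Require Import all_classical all_reals topology normedtype.
From mathcomp Require Import lra.
Set Implicit Arguments. Unset Strict Implicit. Unset Printing Implicit Defensive.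
Import Order.TTheory GRing.Theory Num.Theory.
Import numFieldNormedType.Exports.
Local Open Scope classical_set_scope.
Local Open Scope ring_scope.

(* The closed-ball distance [dbarA d A] is an infimum over a family of radii
   that grows with the radius and is cut out by a closed condition, so it is
   lower semicontinuous; [dbarcA d A] is cut out by an open condition (open
   balls, interior of a closure), so it is upper semicontinuous.  Always
   [dbarA <= dbarcA]; conversely, when [dbarA] is upper semicontinuous, a
   radius slightly above [dbarA d A y] works on a whole neighbourhood of [y],
   putting [y] in the interior of the closed ball, so [dbarcA <= dbarA].
   Hence (1): equality makes [dbar d x] both lower and upper semicontinuous.
   For (2), in addition the balls of [dbar d] and of [d] have the same
   closures, so [dbarA (dbar d) A = dbarA d A]. *)

Section Semicontinuity.
Variables (R : realType) (T : topologicalType).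

Definition upper_semicont (f : T -> R) :=
  forall y r, f y < r -> \forall z \near y, f z < r.

Definition lower_semicont (f : T -> R) :=
  forall y r, r < f y -> \forall z \near y, r < f z.

Lemma semicont_continuous (f : T -> R) :
  upper_semicont f -> lower_semicont f -> continuous f.
Proof.
move=> fu fl y; apply/cvgrPdist_lt => e e0.
have [fy_lt fy_gt] : f y < f y + e /\ f y - e < f y by split; lra.
apply: filterS2 (fu y _ fy_lt) (fl y _ fy_gt) => z /= ? ?.
by rewrite ltr_distlC; apply/andP; split; lra.
Qed.

Lemma continuous_upper_semicont (f : T -> R) :
  continuous f -> upper_semicont f.
Proof.
move=> fc y r fyr; have rfy : 0 < r - f y by rewrite subr_gt0.
move/cvgrPdist_lt: (fc y) => /(_ _ rfy).
by apply: filterS => z /=; rewrite ltr_distlC => /andP[_]; lra.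
Qed.

End Semicontinuity.

Section PositiveRadii.
Variable R : realType.

Lemma has_lbound_pos (P : R -> Prop) : has_lbound [set e | 0 < e /\ P e].
Proof. by exists 0 => e [/ltW]. Qed.

Lemma inf_pos_ge0 (P : R -> Prop) : [set e | 0 < e /\ P e] !=set0 ->
  0 <= inf [set e | 0 < e /\ P e].
Proof. by move=> ne; apply: lb_le_inf => // e [/ltW]. Qed.

End PositiveRadii.

Section ClosedBallDistance.
Variables (R : realType) (X : topologicalType) (d : X -> X -> R).
Hypothesis d_ge0 : forall x y, 0 <= d x y.

Lemma le_pballA A e e' : e <= e' -> pballA d A e `<=` pballA d A e'.
Proof. by move=> ee' z [x Ax dxz]; exists x => //; exact: lt_le_trans ee'. Qed.

Lemma pballA_gt A a y : A a -> pballA d A (d a y + 1) y.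
Proof. by move=> Aa; exists a => //; rewrite /pball /=; lra. Qed.

Lemma dbarA_radii_neq0 A y : A !=set0 ->
  [set e | 0 < e /\ closure (pballA d A e) y] !=set0.
Proof.
case=> a Aa; exists (d a y + 1); split; first by have := d_ge0 a y; lra.
exact/subset_closure/pballA_gt.
Qed.

Lemma dbarcA_radii_neq0 A y : A !=set0 ->
  [set e | 0 < e /\
     (pballA d A e `|` interior (closure (pballA d A e))) y] !=set0.
Proof.
case=> a Aa; exists (d a y + 1); split; first by have := d_ge0 a y; lra.
by left; exact: pballA_gt.
Qed.

Lemma dbarA_ge0 A y : A !=set0 -> 0 <= dbarA d A y.
Proof. by move=> A0; exact/inf_pos_ge0/dbarA_radii_neq0. Qed.

Lemma dbarA_le A y e : 0 < e -> closure (pballA d A e) y -> dbarA d A y <= e.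
Proof. by move=> e0 cl; apply: ge_inf; [exact: has_lbound_pos | split]. Qed.

Lemma dbarcA_le A y e : 0 < e ->
  (pballA d A e `|` interior (closure (pballA d A e))) y -> dbarcA d A y <= e.
Proof. by move=> e0 cl; apply: ge_inf; [exact: has_lbound_pos | split]. Qed.

Lemma closure_pballA_gt_dbarA A y e : A !=set0 ->
  dbarA d A y < e -> closure (pballA d A e) y.
Proof.
move=> A0 /(inf_lt (dbarA_radii_neq0 y A0)) [e' [_ cl] e'e].
exact: closureS (le_pballA (ltW e'e)) _ cl.
Qed.

Lemma dbarA_lower_semicont A : A !=set0 -> lower_semicont (dbarA d A).
Proof.
move=> A0 y r rfy.
have [r_lt0|r_ge0] := ltP r 0.
  by apply: nearW => z; have := dbarA_ge0 z A0; lra.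
pose e := (r + dbarA d A y) / 2.
have outside : ~ closure (pballA d A e) y.
  by move=> /(dbarA_le _); rewrite /e; lra.
have : nbhs y (~` closure (pballA d A e)).
  by apply: open_nbhs_nbhs; split => //; exact/closed_openC/closed_closure.
apply: filterS => z zout /=; rewrite ltNge; apply/negP => fzr; apply: zout.
by apply: closure_pballA_gt_dbarA => //; rewrite /e; lra.
Qed.

Lemma dbarcA_upper_semicont A : has_open_balls d -> A !=set0 ->
  upper_semicont (dbarcA d A).
Proof.
move=> hopen A0 y r /(inf_lt (dbarcA_radii_neq0 y A0)) [e [e0 yin] er].
have : nbhs y (pballA d A e `|` interior (closure (pballA d A e))).
  case: yin => [[a Aa ya]|yint].
    have : nbhs y (pball d a e) by apply: open_nbhs_nbhs; split; [exact: hopen|].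
    by apply: filterS => z az; left; exists a.
  have : nbhs y (interior (closure (pballA d A e))).
    by apply: open_nbhs_nbhs; split; [exact: open_interior|].
  by apply: filterS => z; right.
by apply: filterS => z zin /=; exact: le_lt_trans (dbarcA_le e0 zin) er.
Qed.

Lemma dbarA_le_dbarcA A y : A !=set0 -> dbarA d A y <= dbarcA d A y.
Proof.
move=> A0; apply: lb_le_inf; first exact: dbarcA_radii_neq0.
move=> e [e0 [yin|yint]]; apply: dbarA_le => //.
  exact: subset_closure.
exact: interior_subset.
Qed.

(* A radius [e'] strictly between [dbarA d A y] and [e] bounds [dbarA d A]
   near [y], which puts [y] in the interior of the closed [e']-ball. *)
Lemma dbarcA_le_dbarA A y : A !=set0 -> upper_semicont (dbarA d A) ->
  dbarcA d A y <= dbarA d A y.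
Proof.
move=> A0 fu; apply/le_ltP => e fye; pose e' := (dbarA d A y + e) / 2.
have fy0 := dbarA_ge0 y A0.
have [fye' e'e] : dbarA d A y < e' /\ e' < e by rewrite /e'; split; lra.
apply: (le_lt_trans _ e'e); apply: dbarcA_le; first lra.
right; apply: filterS (fu y e' fye') => z.
exact: closure_pballA_gt_dbarA.
Qed.

Lemma dbarA_continuous_eq A : A !=set0 -> continuous (dbarA d A) ->
  dbarA d A = dbarcA d A.
Proof.
move=> A0 fc; apply/funext => y; apply/eqP; rewrite eq_le.
rewrite dbarA_le_dbarcA //=.
exact/dbarcA_le_dbarA/continuous_upper_semicont.
Qed.

Lemma pballA_dbar_sub A e :
  pballA (dbar d) A e `<=` closure (pballA d A e).
Proof.
move=> y [a Aa ay]; have a0 : [set a] !=set0 by exists a.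
apply: closureS (closure_pballA_gt_dbarA a0 ay) => z [_ -> az].
by exists a.
Qed.

Lemma pballA_sub_dbar A e : pballA d A e `<=` pballA (dbar d) A e.
Proof.
move=> y [a Aa ay]; exists a => //; rewrite /pball /= in ay *.
have ay0 := d_ge0 a y.
apply: (@le_lt_trans _ _ ((d a y + e) / 2)); last lra.
apply: dbarA_le; first lra.
by apply: subset_closure; exists a => //; rewrite /pball /=; lra.
Qed.

Lemma closure_pballA_dbar A e :
  closure (pballA (dbar d) A e) = closure (pballA d A e).
Proof.
apply/seteqP; split; last exact/closureS/pballA_sub_dbar.
rewrite [X in _ `<=` X](closure_id _).1; last exact: closed_closure.
exact/closureS/pballA_dbar_sub.
Qed.

Lemma dbarA_dbar A : dbarA (dbar d) A = dbarA d A.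
Proof.
apply/funext => y; rewrite /dbarA; congr inf; apply: eq_set => e.
by rewrite closure_pballA_dbar.
Qed.

End ClosedBallDistance.

Theorem corollary1p6 (R : realType) (X : topologicalType) (d : X -> X -> R)
  (hd : is_premetric d) (hopen : has_open_balls d) :
  ((dbar d = dbarc d) -> right_continuous (dbar d)) /\
  (dist_continuous d ->
     dbar d = dbarc d /\ right_continuous (dbar d) /\
     dist_continuous (dbar d)).
Proof.
have d_ge0 := hd.1.
have x0 (x : X) : [set x] !=set0 by exists x.
split.
  move=> dbarE x; apply: semicont_continuous.
    by rewrite dbarE; exact: dbarcA_upper_semicont.
  exact: dbarA_lower_semicont.
move=> dc; have dbarE : dbar d = dbarc d.
  by apply/funext => x; exact: dbarA_continuous_eq (dc _ (x0 x)).
split=> //; split; first by move=> x; exact: dc.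
by move=> A A0; rewrite dbarA_dbar //; exact: dc.
Qed.
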